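(* Assume the set $\mathcal{F}:=\{x\in\mathbb{R}^n:\|Ax-b\|_2\le\epsilon,\ \|x\|_2\le d\}$ is nonempty. Let $(\lambda_k)_{k\in\mathbb{N}}$ be a decreasing sequence of positive numbers with $\lambda_k\to0$, and for each $k$ let $x^k$ be an optimal solution of $\min\{Q_{\lambda_k}(x):x\in\mathbb{R}^n\}$. Then: (i) $(x^k)$ is bounded; (ii) every accumulation point $x^\star$ of $(x^k)$ satisfies $x^\star\in D$ and $Ax^\star\in C$; (iii) every accumulation point $x^\star$ of $(x^k)$ is an optimal solution of $\min\{\|x\|_1/\|x\|_2: x\in\mathcal{F}\}$.
   Context: Let $A\in\mathbb{R}^{m\times n}$, $b\in\mathbb{R}^m$, $\epsilon\ge 0$ with $\|b\|_2>\epsilon$, and $d>0$. $C:=\{y\in\mathbb{R}^m:\|y-b\|_2\le\epsilon\}$, $D:=\{x\in\mathbb{R}^n:\|x\|_2\le d\}$, $\mathrm{env}(y):=\frac12\big((\|y-b\|_2-\epsilon)_+\big)^2$ for $y\in\mathbb{R}^m$. For $\lambda>0$, $Q_\lambda(x):=(\lambda\|x\|_1+\mathrm{env}(Ax))/\|x\|_2$ if $x\in D\setminus\{0_n\}$ and $Q_\lambda(x):=+\infty$ otherwise. *)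

From HB Require Import structures.
From mathcomp Require Import all_boot all_order all_algebra.
From mathcomp Require Import all_classical all_reals all_analysis.
Set Implicit Arguments. Unset Strict Implicit. Unset Printing Implicit Defensive.
Import Order.TTheory GRing.Theory Num.Theory.
Local Open Scope ring_scope.

Section Defs.
Variable R : realType.

Definition norm2 (k : nat) (x : 'cV[R]_k) : R :=
  Num.sqrt (\sum_(i < k) (x i 0) ^+ 2).

Definition norm1 (k : nat) (x : 'cV[R]_k) : R := \sum_(i < k) `|x i 0|.

Definition inC (m : nat) (b : 'cV[R]_m) (eps : R) (y : 'cV[R]_m) : Prop :=
  norm2 (y - b) <= eps.

Definition inD (n : nat) (d : R) (x : 'cV[R]_n) : Prop := norm2 x <= d.

Definition env (m : nat) (b : 'cV[R]_m) (eps : R) (y : 'cV[R]_m) : R :=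
  2^-1 * (Num.max (norm2 (y - b) - eps) 0) ^+ 2.

Definition Q (m n : nat) (A : 'M[R]_(m, n)) (b : 'cV[R]_m) (eps d lam : R)
  (x : 'cV[R]_n) : \bar R :=
  if `[< inD d x /\ x != 0 >]
  then ((lam * norm1 x + env b eps (A *m x)) / norm2 x)%:E
  else +oo%E.

Definition is_minimizer (n : nat) (f : 'cV[R]_n -> \bar R) (x : 'cV[R]_n) : Prop :=
  forall y, (f x <= f y)%E.

Definition inF (m n : nat) (A : 'M[R]_(m, n)) (b : 'cV[R]_m) (eps d : R)
  (x : 'cV[R]_n) : Prop := inC b eps (A *m x) /\ inD d x.

Definition accumulation_point (n : nat) (u : nat -> 'cV[R]_n) (p : 'cV[R]_n) : Prop :=
  forall e : R, 0 < e -> forall N : nat, exists k : nat, (N <= k)%N /\ norm2 (u k - p) < e.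

End Defs.

(* A minimiser x^k of Q_{lam_k} lies in D \ {0}, and comparing its value with
   that of any feasible y (whose envelope term vanishes) yields
     lam_k ||x^k||_1 + env(A x^k) <= lam_k (||y||_1/||y||_2) ||x^k||_2.
   Two facts follow: env(A x^k) <= lam_k (||z||_1/||z||_2) d for a fixed
   feasible z, so the residual ||A x^k - b||_2 is eventually below eps + e;
   and ||x^k||_1 - r ||x^k||_2 <= 0 with r = ||y||_1/||y||_2.
   Applied to ||.||_2, to ||A . - b||_2 and to ||.||_1 - r ||.||_2, it gives
   membership of cluster points in D, in A^{-1} C, and their optimality. *)
From HB Require Import structures.
From mathcomp Require Import all_boot all_order all_algebra.
From mathcomp Require Import all_classical all_reals all_analysis.
From mathcomp Require Import ring lra.
Import Order.TTheory GRing.Theory Num.Theory.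
Import numFieldNormedType.Exports.
Local Open Scope classical_set_scope.
Local Open Scope ring_scope.

Set Implicit Arguments. Unset Strict Implicit.

Section Norms.
Variable R : realType.
Implicit Types (k : nat).

Lemma norm2_ge0 k (v : 'cV[R]_k) : 0 <= norm2 v.
Proof. exact: sqrtr_ge0. Qed.

Lemma sq_norm2 k (v : 'cV[R]_k) : norm2 v ^+ 2 = \sum_i (v i 0) ^+ 2.
Proof. by rewrite sqr_sqrtr //; apply: sumr_ge0 => i _; exact: sqr_ge0. Qed.

Lemma norm2N k (v : 'cV[R]_k) : norm2 (- v) = norm2 v.
Proof. by rewrite /norm2; congr Num.sqrt; apply: eq_bigr => i _; rewrite mxE sqrrN. Qed.

Lemma norm2_symm k (u v : 'cV[R]_k) : norm2 (u - v) = norm2 (v - u).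
Proof. by rewrite -norm2N opprB. Qed.

Lemma coord_le_norm2 k (v : 'cV[R]_k) i : `|v i 0| <= norm2 v.
Proof.
rewrite -sqrtr_sqr /norm2 ler_sqrt; last by apply: sumr_ge0 => j _; exact: sqr_ge0.
by rewrite (bigD1 i) //= lerDl; apply: sumr_ge0 => j _; exact: sqr_ge0.
Qed.

Lemma norm2_gt0 k (v : 'cV[R]_k) : v != 0 -> 0 < norm2 v.
Proof.
move=> nz; rewrite lt_neqAle norm2_ge0 andbT; apply: contra nz => /eqP v0.
apply/eqP/matrixP => i j; rewrite (ord1 j) mxE; apply/eqP.
by rewrite -normr_le0 v0; exact: coord_le_norm2.
Qed.

Lemma norm2_eq0 k (v : 'cV[R]_k) : norm2 v = 0 -> forall i, v i 0 = 0.
Proof. by move=> v0 i; apply/eqP; rewrite -normr_le0 -v0 coord_le_norm2. Qed.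

(* Cauchy-Schwarz, via 2ab <= t a^2 + b^2/t with t = ||v|| / ||u||. *)
Lemma cauchy_schwarz k (u v : 'cV[R]_k) :
  \sum_i (u i 0 * v i 0) <= norm2 u * norm2 v.
Proof.
have [u0|u0] := eqVneq (norm2 u) 0.
  by rewrite big1 ?mulr_ge0 ?norm2_ge0 // => i _; rewrite (norm2_eq0 u0) mul0r.
have [v0|v0] := eqVneq (norm2 v) 0.
  by rewrite big1 ?mulr_ge0 ?norm2_ge0 // => i _; rewrite (norm2_eq0 v0) mulr0.
have up : 0 < norm2 u by rewrite lt_neqAle eq_sym u0 norm2_ge0.
have vp : 0 < norm2 v by rewrite lt_neqAle eq_sym v0 norm2_ge0.
set t := norm2 v / norm2 u.
have tp : 0 < t by rewrite divr_gt0.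
have young (p q : R) : 2 * (p * q) <= t * p ^+ 2 + q ^+ 2 / t.
  rewrite -subr_ge0.
  have -> : t * p ^+ 2 + q ^+ 2 / t - 2 * (p * q) = (t * p - q) ^+ 2 / t.
    by field; rewrite gt_eqF.
  by rewrite divr_ge0 ?sqr_ge0 // ltW.
have sum_young : 2 * \sum_i (u i 0 * v i 0) <= t * norm2 u ^+ 2 + norm2 v ^+ 2 / t.
  rewrite !sq_norm2 mulr_sumr [t * _]mulr_sumr mulr_suml -big_split /=.
  by apply: ler_sum => i _; exact: young.
have balanced : t * norm2 u ^+ 2 + norm2 v ^+ 2 / t = 2 * (norm2 u * norm2 v).
  by rewrite /t; field; rewrite !gt_eqF.
by rewrite -(ler_pM2l (_ : 0 < 2 :> R)) // -balanced.
Qed.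

Lemma norm2D k (u v : 'cV[R]_k) : norm2 (u + v) <= norm2 u + norm2 v.
Proof.
have uv0 : 0 <= norm2 u + norm2 v by rewrite addr_ge0 ?norm2_ge0.
rewrite -(ger0_norm uv0) -sqrtr_sqr {1}/norm2 ler_sqrt ?sqr_ge0 //.
have -> : \sum_i ((u + v) i 0) ^+ 2 =
   \sum_i (u i 0) ^+ 2 + 2 * \sum_i (u i 0 * v i 0) + \sum_i (v i 0) ^+ 2.
  by rewrite mulr_sumr -!big_split /=; apply: eq_bigr => i _; rewrite mxE; ring.
by rewrite -!sq_norm2; have := cauchy_schwarz u v; nra.
Qed.

Lemma norm2_lipschitz k (u v : 'cV[R]_k) : norm2 u <= norm2 v + norm2 (u - v).
Proof. by have := norm2D v (u - v); rewrite addrC subrK. Qed.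

Lemma norm1_ge0 k (v : 'cV[R]_k) : 0 <= norm1 v.
Proof. exact: sumr_ge0. Qed.

Lemma norm1_le_norm2 k (v : 'cV[R]_k) : norm1 v <= k%:R * norm2 v.
Proof.
rewrite /norm1 (@le_trans _ _ (\sum_(i < k) norm2 v)) //.
  by apply: ler_sum => i _; exact: coord_le_norm2.
by rewrite sumr_const card_ord mulr_natl.
Qed.

Lemma norm1_lipschitz k (u v : 'cV[R]_k) :
  norm1 u <= norm1 v + k%:R * norm2 (u - v).
Proof.
apply: le_trans (_ : _ <= norm1 v + norm1 (u - v)) _; last first.
  by rewrite lerD2l norm1_le_norm2.
rewrite /norm1 -big_split /=; apply: ler_sum => i _.
by rewrite !mxE -{1}(subrK (v i 0) (u i 0)) addrC (le_trans (ler_normD _ _)) // addrC.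
Qed.

Lemma norm2_le_norm1 k (v : 'cV[R]_k) : norm2 v <= norm1 v.
Proof.
rewrite -(ger0_norm (norm1_ge0 v)) -sqrtr_sqr {1}/norm2 ler_sqrt ?sqr_ge0 //.
rewrite expr2 /norm1 mulr_suml; apply: ler_sum => i _.
have -> : v i 0 ^+ 2 = `|v i 0| * `|v i 0| by rewrite -normrM -expr2 ger0_norm ?sqr_ge0.
by rewrite ler_wpM2l // (bigD1 i) //= lerDl; apply: sumr_ge0.
Qed.

Lemma norm2_mulmx m k (A : 'M[R]_(m, k)) (v : 'cV[R]_k) :
  norm2 (A *m v) <= (\sum_i \sum_j `|A i j|) * norm2 v.
Proof.
apply: le_trans (norm2_le_norm1 _) _; rewrite /norm1 mulr_suml; apply: ler_sum => i _.
rewrite mxE mulr_suml; apply: le_trans (ler_norm_sum _ _ _) _; apply: ler_sum => j _.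
by rewrite normrM ler_wpM2l // coord_le_norm2.
Qed.

Lemma residual_lipschitz m k (A : 'M[R]_(m, k)) (b : 'cV[R]_m) (u v : 'cV[R]_k) :
  norm2 (A *m u - b) <= norm2 (A *m v - b) + (\sum_i \sum_j `|A i j|) * norm2 (u - v).
Proof.
have := norm2_lipschitz (A *m u - b) (A *m v - b).
rewrite (_ : A *m u - b - (A *m v - b) = A *m (u - v)); last first.
  by rewrite mulmxBr opprB addrA subrK.
by move/le_trans; apply; rewrite lerD2l norm2_mulmx.
Qed.

Lemma accumulation_le k (u : nat -> 'cV[R]_k) (F : 'cV[R]_k -> R) (L c : R) p :
  0 <= L -> (forall v w, F v <= F w + L * norm2 (v - w)) ->
  (forall e, 0 < e -> exists N, forall j, (N <= j)%N -> F (u j) <= c + e) ->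
  accumulation_point u p -> F p <= c.
Proof.
move=> L0 F_lip u_le acc; apply/ler_addgt0Pr => e e0.
have [N uN] := u_le (e / 2) (divr_gt0 e0 (ltr0n R 2)).
have L1 : 0 < L + 1 by rewrite ltr_wpDl.
set eta := e / 2 / (L + 1).
have eta0 : 0 < eta by rewrite !divr_gt0.
have Leta : L * eta <= e / 2.
  by rewrite /eta mulrA ler_pdivrMr // mulrDr mulr1 mulrC lerDl divr_ge0 ?ltW.
have [j [Nj near_p]] := acc eta eta0 N.
have := F_lip p (u j); rewrite norm2_symm.
have := uN j Nj; have : L * norm2 (u j - p) <= L * eta by rewrite ler_wpM2l // ltW.
lra.
Qed.

Lemma accumulation_le_all k (u : nat -> 'cV[R]_k) (F : 'cV[R]_k -> R) (L c : R) p :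
  0 <= L -> (forall v w, F v <= F w + L * norm2 (v - w)) ->
  (forall j, F (u j) <= c) -> accumulation_point u p -> F p <= c.
Proof.
move=> L0 F_lip u_le; apply: accumulation_le L0 F_lip _ => e e0.
by exists 0%N => j _; rewrite (le_trans (u_le j)) // lerDl ltW.
Qed.

Lemma l1_l2_gap_lipschitz k (r : R) (u v : 'cV[R]_k) : 0 <= r ->
  norm1 u - r * norm2 u <= norm1 v - r * norm2 v + (k%:R + r) * norm2 (u - v).
Proof.
move=> r0; have l1_lip := norm1_lipschitz u v.
have := ler_wpM2l r0 (norm2_lipschitz v u).
by rewrite (norm2_symm v) mulrDr mulrDl; lra.
Qed.

End Norms.

Section Envelope.
Variables (R : realType) (m : nat) (b : 'cV[R]_m) (eps : R).

Lemma env_ge0 y : 0 <= env b eps y.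
Proof. by rewrite /env mulr_ge0 ?sqr_ge0 // invr_ge0. Qed.

Lemma env_inC y : inC b eps y -> env b eps y = 0.
Proof. by rewrite /inC /env => Cy; rewrite max_r ?subr_le0 // expr0n mulr0. Qed.

Lemma env_small y e : 0 <= e ->
  env b eps y <= e ^+ 2 / 2 -> norm2 (y - b) <= eps + e.
Proof.
move=> e0; rewrite /env; apply: contraTT; rewrite -!ltNge => far.
set M := Num.max _ _.
have eM : e < M by rewrite /M lt_max; apply/orP; left; rewrite ltrBrDl.
have : e ^+ 2 < M ^+ 2 by rewrite ltrXn2r // ?nnegrE // ltW // (le_lt_trans e0).
lra.
Qed.

End Envelope.

Section PenaltyMinimizers.
Variables (R : realType) (m n : nat) (A : 'M[R]_(m, n)) (b : 'cV[R]_m).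
Variables (eps d : R) (lam : nat -> R) (x : nat -> 'cV[R]_n).
Hypothesis b_outside : eps < norm2 b.
Hypothesis lam_gt0 : forall k, 0 < lam k.
Hypothesis x_min : forall k, is_minimizer (Q A b eps d (lam k)) (x k).

Definition l1_l2_ratio (v : 'cV[R]_n) : R := norm1 v / norm2 v.

Lemma l1_l2_ratio_ge0 v : 0 <= l1_l2_ratio v.
Proof. by rewrite divr_ge0 ?norm1_ge0 ?norm2_ge0. Qed.

(* Since b lies outside C, every point mapped into C is nonzero. *)
Lemma preimageC_neq0 y : inC b eps (A *m y) -> y != 0.
Proof.
apply: contraTneq => ->; rewrite /inC mulmx0 sub0r norm2N.
by rewrite -ltNge.
Qed.

(* On the feasible set the envelope vanishes, so Q_lam = lam * (l1/l2 ratio). *)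
Lemma Q_feasible lam' y : inF A b eps d y -> Q A b eps d lam' y = (lam' * l1_l2_ratio y)%:E.
Proof.
move=> [Cy Dy]; rewrite /Q asboolT; last by split; [|exact: preimageC_neq0].
by rewrite env_inC // addr0 mulrA.
Qed.

Section WithFeasiblePoint.
Variable z : 'cV[R]_n.
Hypothesis z_feas : inF A b eps d z.

(* Minimisers have finite value, hence lie in D \ {0}. *)
Lemma minimizer_inD k : inD d (x k) /\ x k != 0.
Proof.
have := x_min k z; rewrite (Q_feasible _ z_feas) /Q.
by case: asboolP => // _; rewrite leye_eq.
Qed.

Lemma minimizer_le_feasible k y : inF A b eps d y ->
  lam k * norm1 (x k) + env b eps (A *m x k) <= lam k * l1_l2_ratio y * norm2 (x k).
Proof.
move=> Fy; have := x_min k y; have [_ xk0] := minimizer_inD k.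
rewrite (Q_feasible _ Fy) /Q (asboolT (minimizer_inD k)) lee_fin.
by rewrite ler_pdivrMr ?norm2_gt0.
Qed.

Lemma minimizer_ratio_le k y : inF A b eps d y ->
  norm1 (x k) - l1_l2_ratio y * norm2 (x k) <= 0.
Proof.
move=> Fy; have := minimizer_le_feasible k Fy; have := env_ge0 b eps (A *m x k).
move=> env_nonneg le_y; rewrite -(ler_pM2l (lam_gt0 k)) mulr0 mulrBr mulrA; lra.
Qed.

Lemma minimizer_env_le k : env b eps (A *m x k) <= lam k * (l1_l2_ratio z * d).
Proof.
have := minimizer_le_feasible k z_feas; have [Dxk _] := minimizer_inD k.
have : lam k * l1_l2_ratio z * norm2 (x k) <= lam k * l1_l2_ratio z * d.
  by rewrite ler_wpM2l // mulr_ge0 ?l1_l2_ratio_ge0 ?ltW.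
have : 0 <= lam k * norm1 (x k) by rewrite mulr_ge0 ?norm1_ge0 ?ltW.
rewrite mulrA; lra.
Qed.

Hypothesis lam_cvg : lam @ \oo --> (0 : R).

Lemma minimizer_residual_small e : 0 < e ->
  exists N, forall k, (N <= k)%N -> norm2 (A *m x k - b) <= eps + e.
Proof.
move=> e0; set C := l1_l2_ratio z * d.
have d0 : 0 <= d := le_trans (norm2_ge0 z) z_feas.2.
have C1 : 0 < C + 1 by rewrite ltr_wpDl // mulr_ge0 ?l1_l2_ratio_ge0.
set t := e ^+ 2 / 2 / (C + 1).
have t0 : 0 < t by rewrite !divr_gt0 ?exprn_gt0.
move: lam_cvg => /cvgrPdist_lt/(_ t t0) [N _ lamN]; exists N => k kN.
apply: env_small; first exact: ltW.
apply: le_trans (minimizer_env_le k) _.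
have : lam k < t by have := lamN k kN; rewrite /= sub0r normrN gtr0_norm.
rewrite /t ltr_pdivlMr // mulrDr mulr1 => lt_t.
rewrite -/C; have := lam_gt0 k; lra.
Qed.

Lemma cluster_inD p : accumulation_point x p -> inD d p.
Proof.
apply: (accumulation_le_all (L := 1)) => // [v w|j].
  by rewrite mul1r norm2_lipschitz.
exact: (minimizer_inD j).1.
Qed.

Lemma cluster_inC p : accumulation_point x p -> inC b eps (A *m p).
Proof.
apply: accumulation_le (residual_lipschitz A b) minimizer_residual_small.
by apply: sumr_ge0 => i _; apply: sumr_ge0.
Qed.

Lemma cluster_optimal p y : accumulation_point x p -> inF A b eps d y ->
  l1_l2_ratio p <= l1_l2_ratio y.
Proof.
move=> acc Fy; have r0 := l1_l2_ratio_ge0 y.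
have p0 : 0 < norm2 p by apply/norm2_gt0/preimageC_neq0/cluster_inC.
have gap_le : norm1 p - l1_l2_ratio y * norm2 p <= 0.
  apply: (accumulation_le_all (F := fun v => norm1 v - l1_l2_ratio y * norm2 v))
    (addr_ge0 (ler0n R n) r0) _ _ acc => [v w|j].
    exact: l1_l2_gap_lipschitz.
  exact: minimizer_ratio_le.
by rewrite /l1_l2_ratio ler_pdivrMr // -subr_le0.
Qed.

End WithFeasiblePoint.
End PenaltyMinimizers.

Unset Implicit Arguments. Set Strict Implicit.

Theorem mainTheorem3 (R : realType) (m n : nat) (A : 'M[R]_(m, n)) (b : 'cV[R]_m)
  (eps d : R) (lam : nat -> R) (x : nat -> 'cV[R]_n) :
  0 <= eps -> eps < norm2 b -> 0 < d ->
  (exists z : 'cV[R]_n, inF A b eps d z) ->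
  (forall k, 0 < lam k) ->
  (forall k, lam k.+1 < lam k) ->
  lam @ \oo --> (0 : R) ->
  (forall k, is_minimizer (Q A b eps d (lam k)) (x k)) ->
  (exists M : R, forall k, norm2 (x k) <= M) /\
  (forall xs, accumulation_point x xs -> inD d xs /\ inC b eps (A *m xs)) /\
  (forall xs, accumulation_point x xs ->
     inF A b eps d xs /\
     forall y, inF A b eps d y -> norm1 xs / norm2 xs <= norm1 y / norm2 y).
Proof.
move=> _ b_out _ [z Fz] lam0 _ lam_cvg x_min.
have cluster_D := cluster_inD b_out x_min Fz.
have cluster_C := cluster_inC b_out lam0 x_min Fz lam_cvg.
split; first by exists d => k; exact: (minimizer_inD b_out x_min Fz k).1.
split; first by move=> xs acc; split; [exact: cluster_D | exact: cluster_C].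
move=> xs acc; split; first by split; [exact: cluster_C | exact: cluster_D].
by move=> y Fy; have := cluster_optimal b_out lam0 x_min Fz lam_cvg acc Fy.
Qed.
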